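(* Let $M\ge1$, $m_0\in\{1,\dots,M\}$, Hilbert spaces $X_{\kappa_m}$ ($|m|\le M$), $\mathbb X_M=\prod_{|m|\le M}X_{\kappa_m}$, $\mathbb X_M^*=\prod_{|m|\le M}X_{\kappa_m}^*$, a block-diagonal $\mathbb D_M$ with boundedly invertible blocks $\mathcal L_\omega(\kappa_m):X_{\kappa_m}\to X_{\kappa_m}^*$, and a coupling $(\mathbb C_M\mathbf V)_m=\mathcal K_m^-\mathbf v_{m-m_0}+\mathcal K_m^+\mathbf v_{m+m_0}$ with bounded $\mathcal K_m^\pm:X_{\kappa_{m\mp m_0}}\to X_{\kappa_m}^*$ (and $\mathcal K_m^\pm:=0$ if $m\mp m_0\notin\{-M,\dots,M\}$). Let $\mathbb T_M:=\mathbb D_M^{-1}\mathbb C_M$, let $\varepsilon>0$ with $\varepsilon\|\mathbb T_M\|<1$, and let $\mathbf F^{[M]}\in\mathbb X_M^*$ be supported only at $m=0$, with $m=0$ component $\hat{\mathbf f}_0$. Let $\mathbf V^{[M]}=(\mathbf v^{[M]}_m)$ be the unique solution of $(\mathbb D_M+\varepsilon\mathbb C_M)\mathbf V^{[M]}=\mathbf F^{[M]}$ and $\mathbf W:=\mathbb D_M^{-1}\mathbf F^{[M]}$. Then, with remainders of norm $O(\varepsilon^2)$ as $\varepsilon\to0^+$ (all other data fixed): (1) $\mathbf v^{[M]}_0=\mathcal L_\omega(\kappa_0)^{-1}\hat{\mathbf f}_0+O(\varepsilon^2)$ in $X_{\kappa_0}$; (2) $\mathbf v^{[M]}_{\pm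 m_0}=-\varepsilon(\mathbb T_M\mathbf W)_{\pm m_0}+O(\varepsilon^2)=-\varepsilon\,\mathcal L_\omega(\kappa_{\pm m_0})^{-1}(\mathbb C_M\mathbf W)_{\pm m_0}+O(\varepsilon^2)$ in $X_{\kappa_{\pm m_0}}$; (3) in the symmetric case $\mathcal K_m^-=\tfrac i2\mathcal K_\omega(\kappa_{m-m_0}\to\kappa_m)$, $\mathcal K_m^+=\tfrac i2\mathcal K_\omega(\kappa_{m+m_0}\to\kappa_m)$ for given bounded operators $\mathcal K_\omega(\kappa_{m'}\to\kappa_m):X_{\kappa_{m'}}\to X_{\kappa_m}^*$, \[ \mathbf v^{[M]}_{\pm m_0}=-\frac{i\varepsilon}2\,\mathcal L_\omega(\kappa_{\pm m_0})^{-1}\mathcal K_\omega(\kappa_0\to\kappa_{\pm m_0})\,\mathbf v^{[M]}_0+O(\varepsilon^2). \]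
   Context: $\mathbb D_M^{-1}$ is the block-diagonal operator with blocks $\mathcal L_\omega(\kappa_m)^{-1}$; ''supported only at $m=0$'' means all components with $m\neq0$ vanish. Components of elements of $\mathbb X_M$ or $\mathbb X_M^*$ are indexed by $m\in\{-M,\dots,M\}$. *)

From HB Require Import structures.
From mathcomp Require Import all_boot all_order all_algebra.
From mathcomp Require Import all_classical all_reals all_analysis.
From mathcomp Require Import complex.
Set Implicit Arguments. Unset Strict Implicit. Unset Printing Implicit Defensive.
Import Order.TTheory GRing.Theory Num.Theory.
Import numFieldNormedType.Exports.
Local Open Scope ring_scope.

Definition in_range (M : nat) (m : int) : bool := `|m| <= M%:Z.

Definition bounded_linear (K : numDomainType) (U V : normedModType K)
    (f : U -> V) : Prop :=
  (forall (a : K) (x y : U), f (a *: x + y) = a *: f x + f y) /\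
  exists c : K, 0 <= c /\ forall x : U, `|f x| <= c * `|x|.

(* Hilbert-product norm on X_M = prod_{|m|<=M} X_m:
   sqrt (sum_{m=-M}^{M} ||V_m||^2), index m = i - M for i < 2M+1 *)
Definition prod_norm (R : rcfType) (M : nat) (X : int -> normedModType R[i])
    (V : forall m : int, X m) : R[i] :=
  sqrtC (\sum_(i < (2 * M).+1) `|V (i%:Z - M%:Z)| ^+ 2).

Definition coupling (R : rcfType) (M : nat) (m0 : int)
    (X Y : int -> normedModType R[i])
    (Km : forall m : int, X (m - m0) -> Y m)
    (Kp : forall m : int, X (m + m0) -> Y m)
    (V : forall m : int, X m) : forall m : int, Y m :=
  fun m => (if in_range M (m - m0) then Km m (V (m - m0)) else 0)
         + (if in_range M (m + m0) then Kp m (V (m + m0)) else 0).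

(* T_M := D_M^{-1} C_M, with Dinv m the inverse of the block L_omega(kappa_m) *)
Definition transfer (R : rcfType) (M : nat) (m0 : int)
    (X Y : int -> normedModType R[i])
    (Dinv : forall m : int, Y m -> X m)
    (Km : forall m : int, X (m - m0) -> Y m)
    (Kp : forall m : int, X (m + m0) -> Y m)
    (V : forall m : int, X m) : forall m : int, X m :=
  fun m => Dinv m (coupling M Km Kp V m).

(* "eps * ||T_M|| < 1" for the operator norm of T_M on the Hilbert product
   X_M; since the operator norm is the least (attained) bound c with
   ||T V|| <= c ||V||, this is: some bound c >= 0 of T_M has eps * c < 1. *)
Definition eps_opnorm_lt1 (R : rcfType) (M : nat) (X : int -> normedModType R[i])
    (T : (forall m : int, X m) -> (forall m : int, X m)) (eps : R[i]) : Prop :=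
  exists c : R[i], 0 <= c /\ eps * c < 1 /\
    forall V : forall m : int, X m, prod_norm M (T V) <= c * prod_norm M V.

From HB Require Import structures.
From mathcomp Require Import all_boot all_order all_algebra.
From mathcomp Require Import all_classical all_reals all_analysis.
From mathcomp Require Import complex.
From mathcomp Require Import zify ring.
Import Order.TTheory GRing.Theory Num.Theory.
Import numFieldNormedType.Exports.
Local Open Scope ring_scope.

(* Applying D_M^{-1} turns the equation into the fixed-point problem
   V = W - eps T_M V.  Measured in the l^1-type norm sum_m ||v_m||, which is
   equivalent to the product norm on the finitely many blocks, T_M is bounded
   by some gain g, so for eps < 1/(2g+1) the solution satisfies ||V|| <= 2||W||
   and V - W = -eps T_M V = O(eps).  Inserting this once more,
   V - (W - eps T_M W) = -eps T_M (V - W) = O(eps^2).  Since W = D_M^{-1} F is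
   supported at 0 and T_M only couples indices m0 apart, (T_M W)_0 = 0 and
   W_{+-m0} = 0, which gives (1) and (2); (3) follows from (2) because
   (T_M W)_{+-m0} depends linearly and boundedly on W_0 = v_0 + O(eps).
   The hypothesis eps ||T_M|| < 1 only serves to make V eps a solution. *)

Lemma in_range_ord (M : nat) (n : 'I_(2 * M).+1) : in_range M (n%:Z - M%:Z).
Proof. by rewrite /in_range ler_norml; apply/andP; split; have := ltn_ord n; lia. Qed.

Lemma in_rangeP (M : nat) (m : int) :
  in_range M m -> exists n : 'I_(2 * M).+1, m = n%:Z - M%:Z.
Proof.
rewrite /in_range ler_norml => /andP[lo hi].
have lt : (absz (m + M%:Z)%R < (2 * M).+1)%N by lia.
by exists (Ordinal lt) => /=; lia.
Qed.

Lemma in_range_pm {M : nat} {m0 s : int} : 0 < m0 -> m0 <= M%:Z ->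
  s = m0 \/ s = - m0 -> in_range M s /\ s != 0.
Proof.
by move=> m0_gt0 m0_le [->|->]; rewrite /in_range ?normrN ?oppr_eq0 gtr0_norm ?gt_eqF.
Qed.

Section RangeSum.
Context {K : numDomainType} (M : nat).

Definition range_sum (f : int -> K) : K := \sum_(n < (2 * M).+1) f (n%:Z - M%:Z).

Variable f : int -> K.
Hypothesis f_ge0 : forall m, in_range M m -> 0 <= f m.

Lemma range_sum_ge0 : 0 <= range_sum f.
Proof. by apply: sumr_ge0 => n _; apply/f_ge0/in_range_ord. Qed.

Lemma ler_range_sum m : in_range M m -> f m <= range_sum f.
Proof.
move=> /in_rangeP[n ->]; rewrite /range_sum (bigD1 n) //= lerDl.
by apply: sumr_ge0 => k _; apply/f_ge0/in_range_ord.
Qed.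

End RangeSum.

Lemma uniform_bound_in_range {K : numDomainType} {M : nat} {P : int -> K -> Prop} :
  (forall m c c', c <= c' -> P m c -> P m c') ->
  (forall m, in_range M m -> exists c, 0 <= c /\ P m c) ->
  exists2 B, 0 <= B & forall m, in_range M m -> P m B.
Proof.
move=> P_mono P_ex.
have /choice[c Hc] : forall m, exists c : K, in_range M m -> 0 <= c /\ P m c.
  move=> m; have [/P_ex[c Pc]|_] := boolP (in_range M m); first by exists c.
  by exists 0.
have c_ge0 m : in_range M m -> 0 <= c m by move=> /Hc[].
exists (range_sum M c); first exact: range_sum_ge0.
by move=> m m_in; apply: P_mono (Hc m m_in).2; apply: ler_range_sum.
Qed.

Section Norms.
Context {K : numDomainType} (M : nat) {X : int -> normedModType K}.

Definition sum_norm (U : forall m, X m) : K := range_sum M (fun m => `|U m|).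

Definition range_norm (U : forall m, X m) (k : int) : K :=
  if in_range M k then `|U k| else 0.

Lemma sum_norm_ge0 U : 0 <= sum_norm U.
Proof. exact: range_sum_ge0. Qed.

Lemma ler_sum_norm U m : in_range M m -> `|U m| <= sum_norm U.
Proof. exact: ler_range_sum. Qed.

Lemma range_norm_le U k b :
  0 <= b -> (in_range M k -> `|U k| <= b) -> range_norm U k <= b.
Proof. by rewrite /range_norm; case: ifP => // k_in _; apply. Qed.

End Norms.

Section BoundedLinear.
Context {K : numDomainType} {U V : normedModType K}.

Definition bounded_by (f : U -> V) (c : K) : Prop := forall x, `|f x| <= c * `|x|.

Lemma bounded_by_le {f : U -> V} {c c' : K} : c <= c' -> bounded_by f c -> bounded_by f c'.
Proof. by move=> le_cc' fc x; apply: le_trans (fc x) _; apply: ler_wpM2r. Qed.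

Lemma bounded_linear_bounded_if {b : bool} {f : U -> V} :
  (b -> bounded_linear f) -> exists c, 0 <= c /\ (b -> bounded_by f c).
Proof. by case: b => [/(_ isT)[_ [c [c_ge0 fc]]]|_]; [exists c | exists 0]. Qed.

Context {f : U -> V} (f_lin : bounded_linear f).

Lemma bounded_linearD x y : f (x + y) = f x + f y.
Proof. by have := f_lin.1 1 x y; rewrite !scale1r. Qed.

Lemma bounded_linear0 : f 0 = 0.
Proof. by apply: (addrI (f 0)); rewrite -bounded_linearD !addr0. Qed.

Lemma bounded_linearZ a x : f (a *: x) = a *: f x.
Proof. by have := f_lin.1 a x 0; rewrite !addr0 bounded_linear0 addr0. Qed.

Lemma bounded_linearB x y : f (x - y) = f x - f y.
Proof. by rewrite bounded_linearD -scaleN1r bounded_linearZ scaleN1r. Qed.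

End BoundedLinear.

Lemma bounded_linear_scale_comp {K : numDomainType} {U V Z : normedModType K}
    {f : V -> Z} {g : U -> V} (a : K) :
  bounded_linear f -> bounded_linear g -> bounded_linear (fun x => a *: f (g x)).
Proof.
move=> f_lin g_lin; split.
  move=> b x y; rewrite (bounded_linearD g_lin) (bounded_linearD f_lin).
  by rewrite (bounded_linearZ g_lin) (bounded_linearZ f_lin) scalerDr !scalerA mulrC.
have [cf [cf_ge0 f_bd]] := f_lin.2; have [cg [cg_ge0 g_bd]] := g_lin.2.
exists (`|a| * cf * cg); split=> [|x]; first by rewrite !mulr_ge0.
rewrite normrZ -!mulrA; apply: ler_wpM2l => //.
by apply: le_trans (f_bd _) _; apply: ler_wpM2l.
Qed.

Lemma norm_addZ_linear_le {K : numDomainType} {U V : normedModType K} {A : U -> V}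
    {cA C eps : K} {x : V} {u w : U} :
  bounded_linear A -> bounded_by A cA -> 0 <= cA -> 0 <= eps ->
  `|x + eps *: A w| <= C * eps ^+ 2 -> `|u - w| <= C * eps ->
  `|x + eps *: A u| <= (C + cA * C) * eps ^+ 2.
Proof.
move=> A_lin A_bd cA_ge0 eps_ge0 xw_le uw_le.
have -> : x + eps *: A u = (x + eps *: A w) + eps *: A (u - w).
  by rewrite (bounded_linearB A_lin) scalerBr addrCA addrK addrC.
apply: le_trans (ler_normD _ _) _; rewrite mulrDl lerD // normrZ ger0_norm //.
apply: le_trans (ler_wpM2l eps_ge0 (A_bd _)) _.
apply: le_trans (ler_wpM2l eps_ge0 (ler_wpM2l cA_ge0 uw_le)) _.
by rewrite le_eqVlt; apply/orP; left; apply/eqP; ring.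
Qed.


Section Transfer.
Context {R : realType} {M : nat} {m0 : int} {X Y : int -> normedModType R[i]}.
Context {Dinv : forall m, Y m -> X m}.
Context {Km : forall m, X (m - m0) -> Y m} {Kp : forall m, X (m + m0) -> Y m}.
Hypothesis Dinv_lin : forall m, in_range M m -> bounded_linear (Dinv m).
Hypothesis Km_lin : forall m, in_range M m -> in_range M (m - m0) -> bounded_linear (Km m).
Hypothesis Kp_lin : forall m, in_range M m -> in_range M (m + m0) -> bounded_linear (Kp m).

Local Notation T := (transfer M Dinv Km Kp).

Lemma coupling_eq0 U m : in_range M m ->
  (in_range M (m - m0) -> U (m - m0) = 0) ->
  (in_range M (m + m0) -> U (m + m0) = 0) ->
  coupling M Km Kp U m = 0.
Proof.
move=> m_in Um Up; rewrite /coupling.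
have -> : (if in_range M (m - m0) then Km m (U (m - m0)) else 0) = 0.
  by case: ifP => // lo; rewrite (Um lo) (bounded_linear0 (Km_lin _ m_in lo)).
have -> : (if in_range M (m + m0) then Kp m (U (m + m0)) else 0) = 0.
  by case: ifP => // hi; rewrite (Up hi) (bounded_linear0 (Kp_lin _ m_in hi)).
exact: addr0.
Qed.

Lemma transfer_supported0_at0 U : m0 != 0 ->
  (forall k, in_range M k -> k != 0 -> U k = 0) -> T U 0 = 0.
Proof.
move=> m0_neq0 U_supp; have in0 : in_range M 0 by rewrite /in_range normr0.
rewrite /transfer coupling_eq0 ?(bounded_linear0 (Dinv_lin _ in0)) //.
  by move=> lo; apply: U_supp; rewrite // sub0r oppr_eq0.
by move=> hi; apply: U_supp; rewrite // add0r.
Qed.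

Lemma transfer_symmetric_supported0 (Kw : forall m' m, X m' -> Y m) U s :
  0 < m0 -> m0 <= M%:Z ->
  (forall m' m, in_range M m' -> in_range M m -> bounded_linear (Kw m' m)) ->
  (forall m x, Km m x = ('i / 2) *: Kw (m - m0) m x) ->
  (forall m x, Kp m x = ('i / 2) *: Kw (m + m0) m x) ->
  (forall k, in_range M k -> k != 0 -> U k = 0) ->
  s = m0 \/ s = - m0 ->
  T U s = ('i / 2) *: Dinv s (Kw 0 s (U 0)).
Proof.
move=> m0_gt0 m0_le Kw_lin Km_sym Kp_sym U_supp s_eq.
have in0 : in_range M 0 by rewrite /in_range normr0.
have [s_in _] := in_range_pm m0_gt0 m0_le s_eq.
(* [m0 - m0] is not convertible to [0] and occurs in the type of [U (m0 - m0)]. *)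
have at0 k : k = 0 -> Kw k s (U k) = Kw 0 s (U 0) by move->.
have vanish k : in_range M k -> k != 0 -> Kw k s (U k) = 0.
  by move=> k_in k_neq0; rewrite U_supp // (bounded_linear0 (Kw_lin _ _ k_in s_in)).
rewrite /transfer -(bounded_linearZ (Dinv_lin _ s_in)) /coupling Km_sym Kp_sym.
congr (Dinv s _); case: s_eq => s_eq; rewrite s_eq in at0 vanish *.
- rewrite (at0 _ (subrr m0)) subrr in0.
  by case: ifP => [k_in|_]; rewrite ?(vanish (m0 + m0)) ?scaler0 ?addr0 //; lia.
- rewrite (at0 _ (addNr m0)) addNr in0.
  by case: ifP => [k_in|_]; rewrite ?(vanish (- m0 - m0)) ?scaler0 ?add0r //; lia.
Qed.

Lemma transferB U U' m : in_range M m ->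
  T U m - T U' m = T (fun k => U k - U' k) m.
Proof.
move=> m_in; rewrite /transfer -(bounded_linearB (Dinv_lin _ m_in)) /coupling.
congr (Dinv m _); rewrite opprD addrACA.
by case: ifP => [lo|_]; case: ifP => [hi|_];
  rewrite ?(bounded_linearB (Km_lin _ m_in lo)) ?(bounded_linearB (Kp_lin _ m_in hi)) ?subrr.
Qed.

Lemma fixpoint_of_solution (D : forall m, X m -> Y m) F V eps m : in_range M m ->
  cancel (D m) (Dinv m) -> D m (V m) + eps *: coupling M Km Kp V m = F m ->
  V m = Dinv m (F m) - eps *: T V m.
Proof.
move=> m_in DK <-.
by rewrite (bounded_linearD (Dinv_lin _ m_in)) (bounded_linearZ (Dinv_lin _ m_in)) DK addrK.
Qed.

Lemma exists_block_bounds : exists cD cK : R[i], [/\ 0 <= cD, 0 <= cK,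
  forall m, in_range M m -> bounded_by (Dinv m) cD,
  forall m, in_range M m -> in_range M (m - m0) -> bounded_by (Km m) cK &
  forall m, in_range M m -> in_range M (m + m0) -> bounded_by (Kp m) cK].
Proof.
have [cD cD_ge0 Dinv_bd] := uniform_bound_in_range
  (fun m => @bounded_by_le _ _ _ (Dinv m)) (fun m m_in => (Dinv_lin m m_in).2).
have [cKm cKm_ge0 Km_bd] := uniform_bound_in_range
  (fun m c c' le_cc' Kc lo => bounded_by_le le_cc' (Kc lo))
  (fun m m_in => bounded_linear_bounded_if (Km_lin m m_in)).
have [cKp cKp_ge0 Kp_bd] := uniform_bound_in_range
  (fun m c c' le_cc' Kc lo => bounded_by_le le_cc' (Kc lo))
  (fun m m_in => bounded_linear_bounded_if (Kp_lin m m_in)).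
have cKm_le : cKm <= cKm + cKp by rewrite lerDl.
have cKp_le : cKp <= cKm + cKp by rewrite lerDr.
exists cD, (cKm + cKp); split; rewrite ?addr_ge0 //.
  by move=> m m_in lo; apply: bounded_by_le cKm_le (Km_bd m m_in lo).
by move=> m m_in hi; apply: bounded_by_le cKp_le (Kp_bd m m_in hi).
Qed.

Section Bounded.
Context {cD cK : R[i]}.
Hypotheses (cD_ge0 : 0 <= cD) (cK_ge0 : 0 <= cK).
Hypothesis Dinv_bounded : forall m, in_range M m -> bounded_by (Dinv m) cD.
Hypothesis Km_bounded :
  forall m, in_range M m -> in_range M (m - m0) -> bounded_by (Km m) cK.
Hypothesis Kp_bounded :
  forall m, in_range M m -> in_range M (m + m0) -> bounded_by (Kp m) cK.

Lemma norm_transfer_le U m : in_range M m ->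
  `|T U m| <= cD * cK * (range_norm M U (m - m0) + range_norm M U (m + m0)).
Proof.
move=> m_in; apply: le_trans (Dinv_bounded _ m_in _) _.
rewrite -mulrA; apply: ler_wpM2l => //; rewrite mulrDr /coupling /range_norm.
apply: le_trans (ler_normD _ _) _.
by apply: lerD; case: ifP => [k_in|_]; rewrite ?normr0 ?mulr0 //;
  [apply: Km_bounded | apply: Kp_bounded].
Qed.

Lemma norm_transfer_le_sum_norm U m : in_range M m ->
  `|T U m| <= cD * cK * 2 * sum_norm M U.
Proof.
move=> m_in; apply: le_trans (norm_transfer_le U m m_in) _.
rewrite -[_ * 2 * _]mulrA; apply: ler_wpM2l; first exact: mulr_ge0.
rewrite mulr_natl mulr2n.
by apply: lerD; apply: range_norm_le => [|/ler_sum_norm //]; exact: sum_norm_ge0.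
Qed.

Let gain := ((2 * M).+1)%:R * (cD * cK * 2).

Let gain_ge0 : 0 <= gain. Proof. by rewrite !mulr_ge0. Qed.

Lemma sum_norm_transfer_le U : sum_norm M (T U) <= gain * sum_norm M U.
Proof.
apply: le_trans (_ : range_sum M (fun=> cD * cK * 2 * sum_norm M U) <= _).
  by apply: ler_sum => n _; apply/norm_transfer_le_sum_norm/in_range_ord.
by rewrite /range_sum sumr_const card_ord /gain mulr_natl mulrnAl.
Qed.

Section FixedPoint.
Context {W V : forall m, X m} {eps : R[i]}.
Hypotheses (eps_ge0 : 0 <= eps) (eps_gain : eps * gain * 2 <= 1).
Hypothesis V_fix : forall m, in_range M m -> V m = W m - eps *: T V m.

Lemma sum_norm_fixpoint_le : sum_norm M V <= sum_norm M W * 2.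
Proof.
set sV := sum_norm M V; set sW := sum_norm M W.
have sV_le : sV <= sW + eps * gain * sV.
  apply: le_trans (_ : sW + eps * sum_norm M (T V) <= _); last first.
    by rewrite -mulrA lerD2l ler_wpM2l // sum_norm_transfer_le.
  rewrite /sV /sum_norm /range_sum mulr_sumr -big_split; apply: ler_sum => n _.
  rewrite V_fix ?in_range_ord //; apply: le_trans (ler_normB _ _) _.
  by rewrite normrZ ger0_norm.
have half : eps * gain * sV * 2 <= sV.
  by rewrite mulrAC ler_piMl ?sum_norm_ge0 // mulrAC.
have := ler_wpM2r (ler0n _ 2) sV_le; rewrite mulrDl.
by move/le_trans/(_ (lerD (lexx _) half)); rewrite mulr2n mulrDr mulr1 lerD2r.
Qed.

Let K1 := cD * cK * 2 * (sum_norm M W * 2).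

Lemma norm_fixpoint_subW k : in_range M k -> `|V k - W k| <= eps * K1.
Proof.
move=> k_in; rewrite V_fix // addrAC subrr add0r normrN normrZ ger0_norm //.
rewrite ler_wpM2l //; apply: le_trans (norm_transfer_le_sum_norm _ k k_in) _.
by rewrite ler_wpM2l ?mulr_ge0 // sum_norm_fixpoint_le.
Qed.

Lemma norm_fixpoint_expansion s : in_range M s ->
  `|V s - (W s - eps *: T W s)| <= cD * cK * 2 * K1 * eps ^+ 2.
Proof.
have sub_sub (a b c : X s) : a - b - (a - c) = - (b - c).
  by rewrite !opprB addrC addrA subrK.
move=> s_in; rewrite V_fix // sub_sub -scalerBr transferB // normrN normrZ ger0_norm //.
apply: le_trans (ler_wpM2l eps_ge0 (norm_transfer_le _ s s_in)) _.
have diff_le k : range_norm M (fun k => V k - W k) k <= eps * K1.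
  apply: range_norm_le; last exact: norm_fixpoint_subW.
  by rewrite mulr_ge0 ?mulr_ge0 ?sum_norm_ge0.
apply: le_trans (ler_wpM2l eps_ge0 (ler_wpM2l _ (lerD (diff_le _) (diff_le _)))) _.
  by rewrite mulr_ge0.
by rewrite le_eqVlt; apply/orP; left; apply/eqP; ring.
Qed.

End FixedPoint.

Lemma fixpoint_expansion_of_bounds W : exists2 delta, 0 < delta & exists C, forall eps V,
  0 <= eps -> eps < delta -> (forall m, in_range M m -> V m = W m - eps *: T V m) ->
  forall s, in_range M s ->
  `|V s - W s| <= C * eps /\ `|V s - (W s - eps *: T W s)| <= C * eps ^+ 2.
Proof.
have gain1_gt0 : 0 < 2 * gain + 1 by rewrite ltr_wpDl ?mulr_ge0.
exists (2 * gain + 1)^-1; first by rewrite invr_gt0.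
have c_ge0 : 0 <= cD * cK * 2 by rewrite !mulr_ge0.
set K1 := cD * cK * 2 * (sum_norm M W * 2).
have K1_ge0 : 0 <= K1 by rewrite !mulr_ge0 ?sum_norm_ge0.
exists (K1 + cD * cK * 2 * K1) => eps V eps_ge0 eps_lt V_fix s s_in.
have eps_gain : eps * gain * 2 <= 1.
  have eps_lt1 : eps * (2 * gain + 1) < 1.
    by move: eps_lt; rewrite -(ltr_pM2r gain1_gt0) mulVf ?gt_eqF.
  apply: le_trans (ltW eps_lt1); rewrite -mulrA.
  by apply: ler_wpM2l => //; rewrite mulrC lerDl.
split.
  apply: le_trans (norm_fixpoint_subW eps_ge0 eps_gain V_fix s s_in) _.
  by rewrite [eps * _]mulrC -/K1; apply: ler_wpM2r => //; rewrite lerDl mulr_ge0.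
apply: le_trans (norm_fixpoint_expansion eps_ge0 eps_gain V_fix s s_in) _.
by apply: ler_wpM2r; rewrite ?exprn_ge0 // lerDr.
Qed.

End Bounded.

Lemma fixpoint_expansion W : exists2 delta, 0 < delta & exists C, forall eps V,
  0 <= eps -> eps < delta -> (forall m, in_range M m -> V m = W m - eps *: T V m) ->
  forall s, in_range M s ->
  `|V s - W s| <= C * eps /\ `|V s - (W s - eps *: T W s)| <= C * eps ^+ 2.
Proof.
have [cD [cK [cD_ge0 cK_ge0 Dinv_bd Km_bd Kp_bd]]] := exists_block_bounds.
exact: fixpoint_expansion_of_bounds cD_ge0 cK_ge0 Dinv_bd Km_bd Kp_bd W.
Qed.

End Transfer.

Theorem mainTheorem18 (R : realType) (M : nat) (m0 : int)
  (X Y : int -> completeNormedModType R[i])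
  (D : forall m : int, X m -> Y m) (Dinv : forall m : int, Y m -> X m)
  (Km : forall m : int, X (m - m0) -> Y m)
  (Kp : forall m : int, X (m + m0) -> Y m)
  (F : forall m : int, Y m)
  (V : R[i] -> forall m : int, X m) :
  (1 <= M)%N ->
  (1 <= m0) -> (m0 <= M%:Z) ->
  (forall m, in_range M m -> bounded_linear (D m)) ->
  (forall m, in_range M m -> bounded_linear (Dinv m)) ->
  (forall m, in_range M m -> cancel (D m) (Dinv m)) ->
  (forall m, in_range M m -> cancel (Dinv m) (D m)) ->
  (forall m, in_range M m -> in_range M (m - m0) -> bounded_linear (Km m)) ->
  (forall m, in_range M m -> in_range M (m + m0) -> bounded_linear (Kp m)) ->
  (* F supported only at m = 0 (its m = 0 component is F 0 = \hat f_0) *)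
  (forall m, in_range M m -> m != 0 -> F m = 0) ->
  (* V eps is the solution of (D_M + eps C_M) V = F whenever 0 < eps, eps ||T_M|| < 1 *)
  (forall eps : R[i], 0 < eps -> eps_opnorm_lt1 M (transfer M Dinv Km Kp) eps ->
     forall m, in_range M m ->
       D m (V eps m) + eps *: coupling M Km Kp (V eps) m = F m) ->
  let W : forall m : int, X m := fun m => Dinv m (F m) in
  let small (eps : R[i]) := 0 < eps /\ eps_opnorm_lt1 M (transfer M Dinv Km Kp) eps in
  (* (1) *)
  (exists C delta : R[i], 0 < delta /\ forall eps, small eps -> eps < delta ->
     `|V eps 0 - Dinv 0 (F 0)| <= C * eps ^+ 2) /\
  (* (2) *)
  (forall s : int, (s = m0 \/ s = - m0) ->
     exists C delta : R[i], 0 < delta /\ forall eps, small eps -> eps < delta ->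
       `|V eps s - (- (eps *: transfer M Dinv Km Kp W s))| <= C * eps ^+ 2 /\
       `|V eps s - (- (eps *: Dinv s (coupling M Km Kp W s)))| <= C * eps ^+ 2) /\
  (* (3) symmetric case *)
  (forall Kw : forall m' m : int, X m' -> Y m,
     (forall m' m, in_range M m' -> in_range M m -> bounded_linear (Kw m' m)) ->
     (forall m x, Km m x = ('i / 2) *: Kw (m - m0) m x) ->
     (forall m x, Kp m x = ('i / 2) *: Kw (m + m0) m x) ->
     forall s : int, (s = m0 \/ s = - m0) ->
     exists C delta : R[i], 0 < delta /\ forall eps, small eps -> eps < delta ->
       `|V eps s - (- ('i * eps / 2) *: Dinv s (Kw 0 s (V eps 0)))|
         <= C * eps ^+ 2).
Proof.
move=> _ m0_ge1 m0_le _ Dinv_lin DinvK _ Km_lin Kp_lin F_supp V_sol W small.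
have m0_gt0 : 0 < m0 by apply: lt_le_trans m0_ge1.
have in0 : in_range M 0 by rewrite /in_range normr0.
have W_supp m : in_range M m -> m != 0 -> W m = 0.
  by move=> m_in m_neq0; rewrite /W F_supp // (bounded_linear0 (Dinv_lin m m_in)).
have [delta delta_gt0 [C expand]] := fixpoint_expansion Dinv_lin Km_lin Kp_lin W.
have {}expand eps s : small eps -> eps < delta -> in_range M s ->
    `|V eps s - W s| <= C * eps /\
    `|V eps s - (W s - eps *: transfer M Dinv Km Kp W s)| <= C * eps ^+ 2.
  move=> [eps_gt0 eps_T] eps_lt s_in; apply: expand (ltW eps_gt0) eps_lt _ s s_in => m m_in.
  exact: fixpoint_of_solution (DinvK m m_in) (V_sol eps eps_gt0 eps_T m m_in).
split; [|split].
- exists C, delta; split=> // eps eps_small eps_lt.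
  have [_] := expand eps 0 eps_small eps_lt in0.
  by rewrite transfer_supported0_at0 ?gt_eqF // scaler0 subr0.
- move=> s /(in_range_pm m0_gt0 m0_le)[s_in s_neq0].
  exists C, delta; split=> // eps eps_small eps_lt.
  by have [_] := expand eps s eps_small eps_lt s_in; rewrite W_supp ?sub0r.
move=> Kw Kw_lin Km_sym Kp_sym s s_eq.
have [s_in s_neq0] := in_range_pm m0_gt0 m0_le s_eq.
have A_lin := bounded_linear_scale_comp ('i / 2) (Dinv_lin s s_in) (Kw_lin 0 s in0 s_in).
have [cA [cA_ge0 A_bd]] := A_lin.2.
exists (C + cA * C), delta; split=> // eps eps_small eps_lt.
have [VW0 _] := expand eps 0 eps_small eps_lt in0.
have [_ Vs] := expand eps s eps_small eps_lt s_in.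
rewrite W_supp // sub0r opprK (transfer_symmetric_supported0 Dinv_lin _ _ _ m0_gt0 m0_le
  Kw_lin Km_sym Kp_sym W_supp s_eq) in Vs.
rewrite -scaleNr opprK mulrAC mulrC -scalerA.
exact: norm_addZ_linear_le A_lin A_bd cA_ge0 (ltW eps_small.1) Vs VW0.
Qed.
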